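(* Let $G$ be a paratopological group with unit $e$. For every neighborhood $U\subset G$ of $e$ there is a left-invariant $\overline{\mathsf{dist}}$-continuous quasi-pseudometric $d:G\times G\to[0,1]$ whose regularization satisfies $\overline d=\overline d^\circ$ and is a left-invariant right-continuous $\overline{\mathsf{dist}}$-continuous quasi-pseudometric, such that $B_d(x;1)\subset xU$ and $B_{\overline d}(x,1)\subset x\,\mathrm{int}\,\overline{U}$ for every $x\in G$. If $G$ is balanced, then $d$ and $\overline d=\overline d^\circ$ are invariant.
   Context: A paratopological group is a group with a topology making multiplication $G\times G\to G$ continuous (inversion need not be continuous). $G$ is balanced if $e$ has a neighborhood base of open sets $V$ with $xV=Vx$ for all $x\in G$. A quasi-pseudometric is $d:G\times G\to[0,\infty)$ with $d(x,x)=0$ and $d(x,z)\le d(x,y)+d(y,z)$; left-invariant if $d(zx,zy)=d(x,y)$, right-invariant if $d(xz,yz)=d(x,y)$, invariant if both. $B_d(x,\varepsilon)=\{y:d(x,y)<\varepsilon\}$, $B_d(A,\varepsilon)=\bigcup_{a\in A}B_d(a,\varepsilon)$. Right-continuous: $y\mapsto d(x,y)$ continuous for each $x$. For non-empty $A$: $\overline d_A(x)=\inf\{\varepsilon>0:x\in\overline{B_d(A,\varepsilon)}\}$, $\overline d^\circ_A(x)=\inf\{\varepsilon>0:x\in B_d(A,\varepsilon)\cup\mathrm{int}\,\overline{B_d(A,\varepsilon)}\}$; $d$ is $\overline{\mathsf{dist}}$-continuous if every $\overline d_A$ is continuous. $\overline d(x,y)=\overline d_{\{x\}}(y)$ and $\overline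 d^\circ(x,y)=\overline d^\circ_{\{x\}}(y)$. *)

From HB Require Import structures.
From mathcomp Require Import all_boot all_order all_algebra.
From mathcomp Require Import all_classical all_reals topology normedtype.
Set Implicit Arguments. Unset Strict Implicit. Unset Printing Implicit Defensive.
Import Order.TTheory GRing.Theory Num.Theory numFieldNormedType.Exports.
Local Open Scope classical_set_scope.
Local Open Scope ring_scope.

Definition is_paratop_group (G : topologicalType) (mul : G -> G -> G)
    (inv : G -> G) (e : G) : Prop :=
  [/\ (forall x y z, mul x (mul y z) = mul (mul x y) z),
      (forall x, mul e x = x /\ mul x e = x),
      (forall x, mul (inv x) x = e /\ mul x (inv x) = e)
    & continuous (fun p : G * G => mul p.1 p.2)].

Definition balanced_ptg (G : topologicalType) (mul : G -> G -> G) (e : G) : Prop :=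
  forall W : set G, nbhs e W ->
    exists V : set G, [/\ open V, V e, V `<=` W &
      forall x, (mul x) @` V = (fun v => mul v x) @` V].

Section QPM.
Context {R : realType} {G : topologicalType}.
Implicit Types (d : G -> G -> R) (A : set G).

Definition quasi_pseudometric d : Prop :=
  [/\ (forall x y, 0 <= d x y), (forall x, d x x = 0) &
      (forall x y z, d x z <= d x y + d y z)].

Definition left_invariant (mul : G -> G -> G) d : Prop :=
  forall x y z, d (mul z x) (mul z y) = d x y.
Definition right_invariant (mul : G -> G -> G) d : Prop :=
  forall x y z, d (mul x z) (mul y z) = d x y.
Definition bi_invariant (mul : G -> G -> G) d : Prop :=
  left_invariant mul d /\ right_invariant mul d.

Definition qball d (x : G) (eps : R) : set G := [set y | d x y < eps].
Definition qballA d A (eps : R) : set G := \bigcup_(a in A) qball d a eps.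

Definition right_continuous d : Prop := forall x, continuous (d x).

Definition dbarA d A (x : G) : R :=
  inf [set eps : R | 0 < eps /\ closure (qballA d A eps) x].
Definition dbarcA d A (x : G) : R :=
  inf [set eps : R | 0 < eps /\
        (qballA d A eps `|` interior (closure (qballA d A eps))) x].

Definition dist_continuous d : Prop :=
  forall A, A !=set0 -> continuous (dbarA d A).

Definition dbar d : G -> G -> R := fun x y => dbarA d [set x] y.
Definition dbarc d : G -> G -> R := fun x y => dbarcA d [set x] y.
End QPM.

(* As in the Birkhoff-Kakutani metrization theorem, pick neighbourhoods
   V_0 ⊆ U of e with V_(n+1)^3 ⊆ V_n (conjugation invariant when G is
   balanced) and let d(x,y) be the infimum, capped at 1, of the weights
   Σ 2^-(n_i) of the chains y = x v_1 ⋯ v_k with v_i ∈ V_(n_i).  A chain of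
   weight at most 2^-n has its product in V_n, so d-balls of radius 1 lie in
   xU; every V_n is a neighbourhood of e, so d-balls are neighbourhoods; and
   conjugation preserves weights, so d is right invariant when G is balanced.
   For the regularization one observation suffices: right translation by
   y^-1 z is continuous and, by left invariance, moves every point by exactly
   d(y,z); hence y ∈ cl B_d(A,s) and d(y,z) < t give z ∈ cl B_d(A,s+t).  This
   yields the continuity of every \overline d_A, the triangle inequality for
   \overline d, the equality \overline d = \overline d^∘ and the inclusion
   of its unit balls in x int cl U. *)

From HB Require Import structures.
From mathcomp Require Import all_boot all_order all_algebra.
From mathcomp Require Import all_classical all_reals topology normedtype.
From mathcomp Require Import unstable sequences lra.
Import Order.TTheory GRing.Theory Num.Theory numFieldNormedType.Exports.

Set Implicit Arguments.
Unset Strict Implicit.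
Unset Printing Implicit Defensive.

Local Open Scope classical_set_scope.
Local Open Scope ring_scope.

Lemma continuous_closure_image (T U : topologicalType) (f : T -> U) (S : set T) x :
  continuous f -> closure S x -> closure (f @` S) (f x).
Proof.
move=> f_cont Sx B /(f_cont x) /Sx [y [Sy By]].
by exists (f y); split => //; exists y.
Qed.

Section ParatopologicalGroup.
Context {G : topologicalType} (mul : G -> G -> G) (inv : G -> G) (e : G).
Hypothesis HG : is_paratop_group mul inv e.

Lemma gmulA x y z : mul x (mul y z) = mul (mul x y) z.
Proof. by case: HG => + _ _ _; apply. Qed.

Lemma gmul1g x : mul e x = x.
Proof. by case: HG => _ + _ _ => /(_ x) []. Qed.

Lemma gmulg1 x : mul x e = x.
Proof. by case: HG => _ + _ _ => /(_ x) []. Qed.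

Lemma gmulVg x : mul (inv x) x = e.
Proof. by case: HG => _ _ + _ => /(_ x) []. Qed.

Lemma gmulgV x : mul x (inv x) = e.
Proof. by case: HG => _ _ + _ => /(_ x) []. Qed.

Lemma gmulKg x y : mul (inv x) (mul x y) = y.
Proof. by rewrite gmulA gmulVg gmul1g. Qed.

Lemma gmulKVg x y : mul x (mul (inv x) y) = y.
Proof. by rewrite gmulA gmulgV gmul1g. Qed.

Lemma gmulgK x y : mul (mul y x) (inv x) = y.
Proof. by rewrite -gmulA gmulgV gmulg1. Qed.

Lemma mul_continuous : continuous (fun p : G * G => mul p.1 p.2).
Proof. by case: HG. Qed.

Lemma lmul_continuous a : continuous (mul a).
Proof.
move=> x; apply: (@continuous_comp _ _ _ (pair a) (fun p : G * G => mul p.1 p.2)).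
  exact: cvg_pair (cvg_cst a) cvg_id.
exact: mul_continuous.
Qed.

Lemma rmul_continuous a : continuous (mul^~ a).
Proof.
move=> x; apply: (@continuous_comp _ _ _ (pair^~ a) (fun p : G * G => mul p.1 p.2)).
  exact: cvg_pair cvg_id (cvg_cst a).
exact: mul_continuous.
Qed.

Lemma lmul_interior_closure x U y :
  interior (closure (mul x @` U)) y -> interior (closure U) (mul (inv x) y).
Proof.
move=> y_int.
have : nbhs (mul (inv x) y) (mul x @^-1` closure (mul x @` U)).
  by apply: lmul_continuous; rewrite gmulKVg.
apply: filterS => w /(continuous_closure_image (lmul_continuous (a := inv x))).
by rewrite gmulKg; apply: closureS => _ [_ [u Uu <-] <-]; rewrite gmulKg.
Qed.

Lemma nbhs_mul_split W : nbhs e W ->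
  exists2 A, nbhs e A & forall a b, A a -> A b -> W (mul a b).
Proof.
move=> W_nbhs.
have : nbhs (e, e) ((fun p : G * G => mul p.1 p.2) @^-1` W).
  by apply: mul_continuous; rewrite /= gmul1g.
case=> -[A B] /= [A_nbhs B_nbhs] AB_W.
exists (A `&` B); first exact: filterI.
by move=> a b [Aa _] [_ Bb]; exact: (AB_W (a, b)).
Qed.

Lemma nbhs_mul3_split W : nbhs e W ->
  exists2 A, nbhs e A & forall a b c, A a -> A b -> A c -> W (mul a (mul b c)).
Proof.
move=> /nbhs_mul_split [A A_nbhs AA_W]; have [B B_nbhs BB_A] := nbhs_mul_split A_nbhs.
exists (A `&` B); first exact: filterI.
by move=> a b c [Aa _] [_ Bb] [_ Bc]; apply: AA_W => //; apply: BB_A.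
Qed.

Definition cube_refinement (W W' : set G) : Prop := [/\ nbhs e W',
  forall a b c, W' a -> W' b -> W' c -> W (mul a (mul b c)) &
  balanced_ptg mul e -> forall z v, W' v -> W' (mul (inv z) (mul v z))].

Lemma nbhs_cube_refinement W : nbhs e W -> exists W', cube_refinement W W'.
Proof.
move=> /nbhs_mul3_split [W' W'_nbhs W'_cube].
have [bal|not_bal] := pselect (balanced_ptg mul e); last first.
  by exists W'; split => // /not_bal.
have [V [V_open Ve VW' V_bal]] := bal W' W'_nbhs.
exists V; split.
- exact: open_nbhs_nbhs.
- by move=> a b c /VW' Va /VW' Vb /VW' Vc; apply: W'_cube.
- move=> _ z v Vv.
  have [u Vu <-] : (mul z @` V) (mul v z) by rewrite V_bal; exists v.
  by rewrite gmulKg.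
Qed.

Lemma nbhs_cube_sequence U : nbhs e U -> exists V : nat -> set G,
  [/\ forall n, nbhs e (V n),
      forall n a b c, V n.+1 a -> V n.+1 b -> V n.+1 c -> V n (mul a (mul b c)),
      V 0 `<=` U &
      balanced_ptg mul e -> forall n z v, V n v -> V n (mul (inv z) (mul v z))].
Proof.
move=> U_nbhs.
have /choice [next next_refines] : forall W, exists W', nbhs e W -> cube_refinement W W'.
  move=> W; have [/nbhs_cube_refinement [W' W'_refines]|not_nbhs] := pselect (nbhs e W).
    by exists W'.
  by exists W => /not_nbhs.
have iter_nbhs n : nbhs e (iter n next U).
  by elim: n => //= n IHn; have [] := next_refines _ IHn.
exists (fun n => iter n.+1 next U); split.
- by move=> n; exact: iter_nbhs.
- by move=> n; have [] := next_refines _ (iter_nbhs n.+1).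
- move=> v V0v; have [V0_nbhs V0_cube _] := next_refines _ U_nbhs.
  have V0e := nbhs_singleton V0_nbhs.
  by have := V0_cube _ _ _ V0e V0e V0v; rewrite !gmul1g.
- by move=> bal n; have [_ _ /(_ bal)] := next_refines _ (iter_nbhs n).
Qed.

End ParatopologicalGroup.

Section Regularization.
Context {R : realType} {G : topologicalType} (mul : G -> G -> G) (inv : G -> G).
Context (e : G) (HG : is_paratop_group mul inv e) (d : G -> G -> R).
Hypotheses (d_qpm : quasi_pseudometric d) (d_linv : left_invariant mul d)
  (d_le1 : forall x y, d x y <= 1).

Let d_ge0 x y : 0 <= d x y. Proof. by case: d_qpm. Qed.
Let d_refl x : d x x = 0. Proof. by case: d_qpm. Qed.
Let d_triangle x y z : d x z <= d x y + d y z. Proof. by case: d_qpm. Qed.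

Definition closure_radii A (x : G) : set R :=
  [set eps | 0 < eps /\ closure (qballA d A eps) x].

Lemma qballA_set1 x t : qballA d [set x] t = qball d x t.
Proof. by rewrite /qballA bigcup_set1. Qed.

Lemma le_qballA A s t : s <= t -> qballA d A s `<=` qballA d A t.
Proof. by move=> st y [a Aa ay]; exists a => //; move: ay; rewrite /qball /=; lra. Qed.

Lemma closure_radii2 A x : A !=set0 -> closure_radii A x 2.
Proof.
move=> [a Aa]; split; first lra.
by apply: subset_closure; exists a => //; rewrite /qball /=; have := d_le1 a x; lra.
Qed.

Lemma dbarA_le A x t : closure_radii A x t -> dbarA d A x <= t.
Proof. by apply: ge_inf; exists 0 => s [/ltW]. Qed.

Lemma dbarA_ge A x t : A !=set0 ->
  (forall s, closure_radii A x s -> t <= s) -> t <= dbarA d A x.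
Proof. by move=> A0; apply: lb_le_inf; exists 2; exact: closure_radii2. Qed.

Lemma dbarA_ge0 A x : A !=set0 -> 0 <= dbarA d A x.
Proof. by move=> A0; apply: dbarA_ge => // s [/ltW]. Qed.

Lemma dbarA_lt A x t : A !=set0 -> dbarA d A x < t ->
  exists2 s, closure_radii A x s & s < t.
Proof. by move=> A0; apply: inf_lt; exists 2; exact: closure_radii2. Qed.

Lemma closure_qballA_shift A s t y z : closure (qballA d A s) y -> d y z < t ->
  closure (qballA d A (s + t)) z.
Proof.
move=> Ay dyz; pose g := mul (inv y) z.
have zE : z = mul y g by rewrite /g (gmulKVg HG).
have := continuous_closure_image (rmul_continuous HG (a := g)) Ay; rewrite -zE.
apply: closureS => _ [w [a Aa aw] <-]; exists a => //.
have wg : d w (mul w g) = d y z.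
  by rewrite -{1}(gmulg1 HG w) d_linv zE -{1}(gmulg1 HG y) d_linv.
by rewrite /qball /= in aw *; have := d_triangle a w (mul w g); lra.
Qed.

Lemma closure_qball_shift x s t y z : closure (qball d x s) y -> d y z < t ->
  closure (qball d x (s + t)) z.
Proof. by rewrite -!qballA_set1; exact: closure_qballA_shift. Qed.



Lemma dbar_le x y t : 0 < t -> closure (qball d x t) y -> dbar d x y <= t.
Proof. by move=> t0 xy; apply: dbarA_le; rewrite /closure_radii /= qballA_set1. Qed.

Lemma dbar_lt x y t : dbar d x y < t ->
  exists2 s, 0 < s /\ closure (qball d x s) y & s < t.
Proof.
move=> /(dbarA_lt (ex_intro _ x erefl)) [s].
by rewrite /closure_radii /= qballA_set1 => Ss lts; exists s.
Qed.

Lemma dbar_le_d x y : dbar d x y <= d x y.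
Proof.
apply/ler_gtP => t dt; apply: dbar_le; first by have := d_ge0 x y; lra.
exact: subset_closure.
Qed.

Lemma dbar_le1 x y : dbar d x y <= 1.
Proof. exact: le_trans (dbar_le_d x y) (d_le1 x y). Qed.

Lemma dbar_quasi_pseudometric : quasi_pseudometric (dbar d).
Proof.
split.
- by move=> x y; apply: dbarA_ge0; exists x.
- move=> x; apply/eqP; rewrite eq_le dbarA_ge0 ?andbT; last by exists x.
  by have := dbar_le_d x x; rewrite d_refl.
- move=> x y z; apply/ler_addgt0Pr => eps eps0.
  have [s [s0 xy] lts] := dbar_lt (ltac:(lra) : dbar d x y < dbar d x y + eps / 2).
  have [t [t0 yz] ltt] := dbar_lt (ltac:(lra) : dbar d y z < dbar d y z + eps / 2).
  suff : dbar d x z <= s + t by lra.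
  apply: dbar_le; first lra.
  have /closure_id -> : closed (closure (qball d x (s + t))) by exact: closed_closure.
  by apply: closureS yz => w; exact: closure_qball_shift xy.
Qed.

Lemma dbar_isometry_le (f : G -> G) : continuous f ->
  (forall a b, d (f a) (f b) = d a b) -> forall x y, dbar d (f x) (f y) <= dbar d x y.
Proof.
move=> f_cont f_iso x y; apply/ler_gtP => t /dbar_lt [s [s0 xy] lts].
suff : dbar d (f x) (f y) <= s by lra.
apply: dbar_le => //; have := continuous_closure_image f_cont xy.
by apply: closureS => _ [w xw <-]; rewrite /qball /= f_iso.
Qed.

Lemma dbar_left_invariant : left_invariant mul (dbar d).
Proof.
have le z x y :=
  dbar_isometry_le (lmul_continuous HG (a := z)) (fun a b => d_linv a b z) x y.
move=> x y z; apply/eqP; rewrite eq_le le /=.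
by have := le (inv z) (mul z x) (mul z y); rewrite !(gmulKg HG).
Qed.

Lemma dbar_right_invariant : right_invariant mul d -> right_invariant mul (dbar d).
Proof.
move=> d_rinv.
have le z x y :=
  dbar_isometry_le (rmul_continuous HG (a := z)) (fun a b => d_rinv a b z) x y.
move=> x y z; apply/eqP; rewrite eq_le le /=.
by have := le (inv z) (mul x z) (mul y z); rewrite !(gmulgK HG).
Qed.


Lemma dbar_le_dbarc x y : dbar d x y <= dbarc d x y.
Proof.
apply: lb_le_inf.
  exists 2; split; first lra.
  by left; exists x => //; rewrite /qball /=; have := d_le1 x y; lra.
move=> t [t0 Bt]; apply: dbarA_le; split => //.
by case: Bt => [/subset_closure|/interior_subset].
Qed.

Lemma dbarA_lsc A x eps : A !=set0 -> 0 < eps ->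
  \forall y \near x, dbarA d A x - eps < dbarA d A y.
Proof.
move=> A0 eps0; have [small|big] := ltP (dbarA d A x) eps.
  by apply: nearW => y; have := dbarA_ge0 y A0; lra.
pose t := dbarA d A x - eps / 2.
have notAx : ~ closure (qballA d A t) x.
  move=> Ax; suff : dbarA d A x <= t by rewrite /t; lra.
  by apply: dbarA_le; split => //; rewrite /t; lra.
have : nbhs x (~` closure (qballA d A t)).
  by apply: open_nbhs_nbhs; split => //; exact/closed_openC/closed_closure.
apply: filterS => y notAy; suff : t <= dbarA d A y by rewrite /t; lra.
apply: dbarA_ge => // r [r0 Ay]; rewrite leNgt; apply/negP => rt.
by apply: notAy; apply: closureS Ay; exact/le_qballA/ltW.
Qed.

Hypothesis qball_nbhs : forall x eps, 0 < eps -> nbhs x (qball d x eps).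

Lemma dbarA_usc A x eps : A !=set0 -> 0 < eps ->
  \forall y \near x, dbarA d A y < dbarA d A x + eps.
Proof.
move=> A0 eps0.
have eps2 : 0 < eps / 2 by lra.
have [s [s0 Ax] lts] := dbarA_lt A0 (ltac:(lra) : dbarA d A x < dbarA d A x + eps / 2).
apply: filterS _ (qball_nbhs x eps2) => y xy.
suff : dbarA d A y <= s + eps / 2 by lra.
apply: dbarA_le; split; first lra.
exact: closure_qballA_shift Ax xy.
Qed.

Lemma quasi_pseudometric_dist_continuous : dist_continuous d.
Proof.
move=> A A0 x; apply/cvgrPdist_lt => eps eps0.
apply: filterS2 (dbarA_usc x A0 eps0) (dbarA_lsc x A0 eps0) => y.
by rewrite ltr_norml; lra.
Qed.

Lemma dbar_qball_nbhs x eps : 0 < eps -> nbhs x (qball (dbar d) x eps).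
Proof.
move=> /(qball_nbhs x); apply: filterS => y; rewrite /qball /=.
by have := dbar_le_d x y; lra.
Qed.

(* The d-ball of radius eps/2 around y is a neighbourhood of y inside the
   closure of B_d(x, s + eps/2), so y lies in its interior. *)
Lemma dbarc_le_dbar x y : dbarc d x y <= dbar d x y.
Proof.
apply/ler_addgt0Pr => eps eps0; have eps2 : 0 < eps / 2 by lra.
have [s [s0 xy] lts] := dbar_lt (ltac:(lra) : dbar d x y < dbar d x y + eps / 2).
suff : dbarc d x y <= s + eps / 2 by lra.
apply: ge_inf; first by exists 0 => r [/ltW].
split; first lra; right; rewrite qballA_set1.
by apply: filterS _ (qball_nbhs y eps2) => w; exact: closure_qball_shift xy.
Qed.

Lemma dbar_dbarc : dbar d = dbarc d.
Proof.
apply/funext => x; apply/funext => y; apply/eqP.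
by rewrite eq_le dbar_le_dbarc dbarc_le_dbar.
Qed.

Lemma dbar_qball_sub U : (forall x, qball d x 1 `<=` mul x @` U) ->
  forall x, qball (dbar d) x 1 `<=` mul x @` interior (closure U).
Proof.
move=> dU x y /dbar_lt [s [s0 xy] lts1].
exists (mul (inv x) y); last by rewrite (gmulKVg HG).
apply: (lmul_interior_closure HG).
have s1 : 0 < 1 - s by lra.
apply: filterS _ (qball_nbhs y s1) => w yw.
apply: (closureS (dU x)).
by rewrite -[1](subrKC s); exact: closure_qball_shift xy yw.
Qed.

End Regularization.

Section HalfPowers.
Context {R : realType}.

Definition halfpow (n : nat) : R := 2^-1 ^+ n.

Lemma halfpow_gt0 n : 0 < halfpow n.
Proof. by rewrite exprn_gt0 // invr_gt0. Qed.

Lemma halfpowS n : halfpow n.+1 = halfpow n / 2.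
Proof. by rewrite /halfpow exprS mulrC. Qed.

Lemma ler_halfpow m n : (halfpow m <= halfpow n) = (n <= m)%N.
Proof. by rewrite ler_iXn2l // ?invr_gt0 ?invf_lt1 //; lra. Qed.

Lemma halfpow_small (eps : R) : 0 < eps -> exists n, halfpow n < eps.
Proof.
move=> eps0.
have half_lt1 : `|2^-1 : R| < 1 by rewrite ger0_norm ?invr_ge0 ?invf_lt1 //; lra.
have /cvgr0_norm_lt /(_ eps eps0) [N _ /(_ N (leqnn N))] := cvg_expr half_lt1.
by rewrite /= ger0_norm ?exprn_ge0 ?invr_ge0 //; exists N.
Qed.

End HalfPowers.

Section ChainDistance.
Context {R : realType} {G : topologicalType} (mul : G -> G -> G) (inv : G -> G).
Context (e : G) (HG : is_paratop_group mul inv e) (V : nat -> set G).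
Hypotheses (V_nbhs : forall n, nbhs e (V n))
  (V_cube : forall n a b c, V n.+1 a -> V n.+1 b -> V n.+1 c -> V n (mul a (mul b c))).

(* A chain is a list of links (n, v) with v in V n; it leads from x to
   x v_1 ... v_k and weighs the sum of the 2^-n. *)
Fixpoint admissible (c : seq (nat * G)) : Prop :=
  if c is p :: c' then V p.1 p.2 /\ admissible c' else True.

Definition chain_prod (c : seq (nat * G)) : G := foldr (fun p => mul p.2) e c.

Definition chain_weight (c : seq (nat * G)) : R := \sum_(p <- c) halfpow p.1.

Lemma chain_weight_cons p c : chain_weight (p :: c) = halfpow p.1 + chain_weight c.
Proof. by rewrite /chain_weight big_cons. Qed.

Lemma chain_weight_cat c1 c2 : chain_weight (c1 ++ c2) = chain_weight c1 + chain_weight c2.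
Proof. by rewrite /chain_weight big_cat. Qed.

Lemma chain_weight_ge0 c : 0 <= chain_weight c.
Proof. by rewrite sumr_ge0 // => p _; exact/ltW/halfpow_gt0. Qed.

Lemma chain_weight_le0 c : chain_weight c <= 0 -> c = [::].
Proof.
case: c => // p c; rewrite chain_weight_cons => w; exfalso.
by have := halfpow_gt0 (R := R) p.1; have := chain_weight_ge0 c; lra.
Qed.

Lemma chain_prod_cat c1 c2 : chain_prod (c1 ++ c2) = mul (chain_prod c1) (chain_prod c2).
Proof. by elim: c1 => [|p c1 IHc] /=; rewrite ?(gmul1g HG) // IHc (gmulA HG). Qed.

Lemma admissible_cat c1 c2 : admissible (c1 ++ c2) <-> admissible c1 /\ admissible c2.
Proof.
elim: c1 => [|p c1 IHc] /=; first by split => // -[].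
by rewrite IHc; split => [[? [? ?]]|[[? ?] ?]].
Qed.

Lemma V_e n : V n e.
Proof. exact: nbhs_singleton. Qed.

Lemma V_decreasing m n : (m <= n)%N -> V n `<=` V m.
Proof.
elim: n => [|n IHn]; first by rewrite leqn0 => /eqP ->.
rewrite leq_eqVlt ltnS => /orP [/eqP -> //|/IHn Vnm v Vv]; apply: Vnm.
by have := V_cube (V_e _) (V_e _) Vv; rewrite !(gmul1g HG).
Qed.

Lemma chain_split c t : c != [::] -> 0 <= t ->
  exists c1 p c2, [/\ c = c1 ++ p :: c2, chain_weight c1 <= t &
    t < chain_weight c1 + halfpow p.1 \/ c2 = [::]].
Proof.
elim: c t => // p c IHc t _ t0.
have [lt_tp|le_pt] := ltP t (halfpow p.1).
  by exists [::], p, c; rewrite /chain_weight big_nil add0r; split => //; left.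
have [->|c0] := eqVneq c [::].
  by exists [::], p, [::]; rewrite /chain_weight big_nil; split => //; right.
have [|c1 [q [c2 [-> le1 lt2]]]] := IHc (t - halfpow p.1) c0; first lra.
exists (p :: c1), q, c2; rewrite chain_weight_cons; split => //; first lra.
by case: lt2 => [?|->]; [left; lra | right].
Qed.

(* Cut the chain where its weight crosses 2^-(n+1): both sides weigh at most
   2^-(n+1) and the middle link lies in V (n+1) unless it is the whole chain. *)
Lemma admissible_chain_prod c n :
  admissible c -> chain_weight c <= halfpow n -> V n (chain_prod c).
Proof.
have [m] := ubnP (size c); elim: m => // m IHm in c n *.
rewrite ltnS => sz_c c_adm.
have [->|c0] := eqVneq c [::]; first by move=> _; exact: V_e.
have [c1 [[k v] [c2 [cE w1 w2]]]] := chain_split c0 (ltW (halfpow_gt0 n.+1)).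
move: c_adm sz_c; rewrite cE admissible_cat size_cat /=.
move=> -[c1_adm [Vv c2_adm]] sz_c.
rewrite chain_weight_cat chain_weight_cons /= chain_prod_cat /= => w.
have w2' : chain_weight c2 <= halfpow n.+1.
  case: w2 => [|->]; last by rewrite /chain_weight big_nil; exact/ltW/halfpow_gt0.
  by move: w; rewrite halfpowS /=; lra.
have sz_c1 : (size c1 < m)%N by apply: leq_trans sz_c; rewrite addnS ltnS leq_addr.
have Vc1 := IHm c1 n.+1 sz_c1 c1_adm w1.
have Vc2 := IHm c2 n.+1 (leq_trans (leq_addl _ _) sz_c) c2_adm w2'.
have : (n <= k)%N.
  rewrite -(ler_halfpow (R := R)).
  by have := chain_weight_ge0 c1; have := chain_weight_ge0 c2; lra.
rewrite leq_eqVlt => /orP [/eqP nk|nk]; last first.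
  by apply: V_cube => //; exact: V_decreasing nk _ Vv.
rewrite -nk in w; have c1_ge0 := chain_weight_ge0 c1; have c2_ge0 := chain_weight_ge0 c2.
have /chain_weight_le0 -> : chain_weight c1 <= 0 by lra.
have /chain_weight_le0 -> : chain_weight c2 <= 0 by lra.
by rewrite /= (gmul1g HG) (gmulg1 HG) nk.
Qed.

(* The length 1 is always allowed: it caps the distance at 1 and makes the
   infimum range over a nonempty set. *)
Definition chain_lengths (x y : G) : set R := [set r | r = 1 \/
  exists c, [/\ admissible c, mul x (chain_prod c) = y & r = chain_weight c]].

Definition chain_dist (x y : G) : R := inf (chain_lengths x y).

Lemma chain_lengths_ge0 x y r : chain_lengths x y r -> 0 <= r.
Proof. by case=> [->|[c [_ _ ->]]]; [exact: ler01 | exact: chain_weight_ge0]. Qed.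

Lemma chain_dist_le x y r : chain_lengths x y r -> chain_dist x y <= r.
Proof. by apply: ge_inf; exists 0 => s /chain_lengths_ge0. Qed.

Lemma chain_dist_ge0 x y : 0 <= chain_dist x y.
Proof. by apply: lb_le_inf => [|r /chain_lengths_ge0 //]; exists 1; left. Qed.

Lemma chain_dist_le1 x y : chain_dist x y <= 1.
Proof. by apply: chain_dist_le; left. Qed.

Lemma chain_dist_lt x y t : chain_dist x y < t -> exists2 r, chain_lengths x y r & r < t.
Proof. by apply: inf_lt; exists 1; left. Qed.

Lemma chain_lengths_add x y z r1 r2 : chain_lengths x y r1 -> chain_lengths y z r2 ->
  chain_dist x z <= r1 + r2.
Proof.
move=> xy yz; have := chain_lengths_ge0 xy; have := chain_lengths_ge0 yz.
case: xy => [->|[c1 [c1_adm xy ->]]] r20 r10; first by have := chain_dist_le1 x z; lra.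
case: yz => [->|[c2 [c2_adm yz ->]]]; first by have := chain_dist_le1 x z; lra.
apply: chain_dist_le; right; exists (c1 ++ c2); split.
- exact/admissible_cat.
- by rewrite chain_prod_cat (gmulA HG) xy.
- by rewrite chain_weight_cat.
Qed.

Lemma chain_dist_quasi_pseudometric : quasi_pseudometric chain_dist.
Proof.
split; [exact: chain_dist_ge0 | |].
- move=> x; apply/eqP; rewrite eq_le chain_dist_ge0 andbT.
  apply: chain_dist_le; right; exists [::].
  by rewrite /chain_weight big_nil /= (gmulg1 HG).
- move=> x y z; apply/ler_addgt0Pr => eps eps0.
  have [r1 xy lt1] :=
    chain_dist_lt (ltac:(lra) : chain_dist x y < chain_dist x y + eps / 2).
  have [r2 yz lt2] :=
    chain_dist_lt (ltac:(lra) : chain_dist y z < chain_dist y z + eps / 2).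
  by have := chain_lengths_add xy yz; lra.
Qed.

Lemma chain_dist_left_invariant : left_invariant mul chain_dist.
Proof.
move=> x y z; congr inf; apply/funext => r; apply/propext.
split=> -[->|[c [c_adm xy ->]]]; [by left | | by left |]; right; exists c; split => //.
- by move: xy; rewrite -(gmulA HG) => /(congr1 (mul (inv z))); rewrite !(gmulKg HG).
- by rewrite -(gmulA HG) xy.
Qed.

Lemma chain_dist_halfpow n x v : V n v -> chain_dist x (mul x v) <= halfpow n.
Proof.
move=> Vv; apply: chain_dist_le; right; exists [:: (n, v)].
by rewrite chain_weight_cons /chain_weight big_nil addr0 /= (gmulg1 HG).
Qed.

Lemma chain_dist_lt1 x y : chain_dist x y < 1 -> exists2 u, V 0 u & y = mul x u.
Proof.
move=> /chain_dist_lt [r [->|[c [c_adm <- ->]]] w1]; first by rewrite ltxx in w1.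
by exists (chain_prod c) => //; apply: admissible_chain_prod => //; exact: ltW.
Qed.

Lemma chain_dist_qball_nbhs x eps : 0 < eps -> nbhs x (qball chain_dist x eps).
Proof.
move=> /halfpow_small [n ltn].
have : nbhs x (mul (inv x) @^-1` V n).
  by apply: (lmul_continuous HG); rewrite (gmulVg HG).
apply: filterS => z /(chain_dist_halfpow x); rewrite (gmulKVg HG) /qball /=; lra.
Qed.

Lemma chain_prod_conj z c : chain_prod [seq (p.1, mul (inv z) (mul p.2 z)) | p <- c] =
  mul (inv z) (mul (chain_prod c) z).
Proof.
elim: c => [|p c IHc] /=; first by rewrite (gmul1g HG) (gmulVg HG).
by rewrite IHc !(gmulA HG) (gmulgK HG).
Qed.

Lemma chain_dist_right_invariant :
  (forall n z v, V n v -> V n (mul (inv z) (mul v z))) -> right_invariant mul chain_dist.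
Proof.
move=> V_conj.
have le x y z : chain_dist (mul x z) (mul y z) <= chain_dist x y.
  apply: lb_le_inf => [|r [->|[c [c_adm xy ->]]]]; first by exists 1; left.
    exact: chain_dist_le1.
  apply: chain_dist_le; right.
  exists [seq (p.1, mul (inv z) (mul p.2 z)) | p <- c]; split.
  - by elim: c c_adm {xy} => //= p c IHc [Vp c_adm]; split; [exact: V_conj | exact: IHc].
  - by rewrite chain_prod_conj -(gmulA HG) (gmulKVg HG) (gmulA HG) xy.
  - by rewrite /chain_weight big_map.
move=> x y z; apply/eqP; rewrite eq_le le /=.
by have := le (mul x z) (mul y z) (inv z); rewrite !(gmulgK HG).
Qed.

End ChainDistance.

Theorem theorem7p4 (R : realType) (G : topologicalType)
    (mul : G -> G -> G) (inv : G -> G) (e : G)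
    (HG : is_paratop_group mul inv e) (U : set G) (HU : nbhs e U) :
  exists d : G -> G -> R,
    [/\ [/\ quasi_pseudometric d, (forall x y, d x y <= 1),
            left_invariant mul d & dist_continuous d],
        dbar d = dbarc d,
        [/\ quasi_pseudometric (dbar d), left_invariant mul (dbar d),
            right_continuous (dbar d) & dist_continuous (dbar d)],
        (forall x, qball d x 1 `<=` (mul x) @` U) /\
        (forall x, qball (dbar d) x 1 `<=` (mul x) @` interior (closure U)) &
        (balanced_ptg mul e -> bi_invariant mul d /\ bi_invariant mul (dbar d))].
Proof.
have [V [V_nbhs V_cube V0U V_conj]] := nbhs_cube_sequence HG HU.
pose d := @chain_dist R G mul e V.
have d_qpm : quasi_pseudometric d := chain_dist_quasi_pseudometric HG V.
have d_linv : left_invariant mul d := chain_dist_left_invariant HG V.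
have d_le1 : forall x y, d x y <= 1 := chain_dist_le1 mul e V.
have d_nbhs : forall x eps, 0 < eps -> nbhs x (qball d x eps) :=
  chain_dist_qball_nbhs HG V_nbhs.
have d_cont := quasi_pseudometric_dist_continuous HG d_qpm d_linv d_le1 d_nbhs.
have dbar_qpm := dbar_quasi_pseudometric HG d_qpm d_linv d_le1.
have dbar_linv := dbar_left_invariant HG d_linv d_le1.
exists d; split.
- by split.
- exact: (dbar_dbarc HG d_qpm d_linv d_le1 d_nbhs).
- split => //; first by move=> x; apply: d_cont; exists x.
  exact: (quasi_pseudometric_dist_continuous HG dbar_qpm dbar_linv
    (dbar_le1 d_qpm d_le1) (dbar_qball_nbhs d_qpm d_nbhs)).
- have dU x : qball d x 1 `<=` mul x @` U.
    by move=> y /(chain_dist_lt1 HG V_nbhs V_cube) [u /V0U Uu ->]; exists u.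
  by split => //; exact: (dbar_qball_sub HG d_qpm d_linv d_le1 d_nbhs dU).
- move=> /V_conj/(chain_dist_right_invariant HG) d_rinv.
  by split; split => //; exact: (dbar_right_invariant HG d_le1).
Qed.
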